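(* For every constant $\alpha>0$ there is a constant $\beta>0$ depending only on $\alpha$ such that the following holds. Let $k \in \mathbb{Z}_+$, $\varepsilon \in (0, 1)$, let $X \subset \mathbb{R}^d$ be a finite data set with $|X|=n$, let $p\in\{1,\dots,n\}$, let $\mathcal{L}$ be a finite collection of lines in $\mathbb{R}^d$, and let $s>0$ and $t_l>0$ for $l\in\mathcal{L}$. Suppose (i) $X$ is partitioned into sets $\{X_l : l \in \mathcal{L}\}$ with $X_l \subseteq l$ for each $l \in \mathcal{L}$, and (ii) for each $l \in \mathcal{L}$, $X_l$ is partitioned into a family $\mathcal{Y}_l$ of sub-intervals (sets of points of $X_l$ that are consecutive in the order along $l$, with pairwise disjoint segments $I(Y)$), such that every $Y \in \mathcal{Y}_l$ satisfies $\mathrm{len}(I(Y)) \leq \alpha\frac{\varepsilon}{p} s$ or $\delta(Y) \leq \alpha\frac{\varepsilon}{k} t_l$. Let $D$ be the multiset consisting of $\mu(Y)$ with multiplicity $|Y|$ for each $Y\in\mathcal{Y}_l$, $l\in\mathcal{L}$. Then for every set $C\subset \mathbb{R}^d$ of $k$ centers, $|\mathrm{cost}_p(D, C) - \mathrm{cost}_p(X, C)| \leq \beta\,\varepsilon \,\big(s + \sum_{l \in \mathcal{L}} t_l\big)$.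
   Context: Distances are Euclidean and $d(x,C):=\min_{c\in C}d(x,c)$. For a finite multiset $Y$ and finite nonempty $C$, $\mathrm{cost}_p(Y,C)$ is the sum of the $p$ largest values of $d(y,C)$, $y\in Y$ (with multiplicity). For a finite set $Y$ of points on a line, $I(Y)$ is the smallest closed segment containing $Y$, $\mathrm{len}(I(Y))$ its length, $\mu(Y):=\frac{1}{|Y|}\sum_{y\in Y}y$ its mean, and $\delta(Y):=\sum_{y\in Y}d(y,\mu(Y))$ its cumulative error. *)

From HB Require Import structures.
From mathcomp Require Import all_boot all_order all_algebra.
From mathcomp Require Import reals.
Set Implicit Arguments. Unset Strict Implicit. Unset Printing Implicit Defensive.
Import Order.TTheory GRing.Theory Num.Theory.
Local Open Scope ring_scope.

Section Defs.
Variables (R : realType) (d : nat).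
Local Notation pt := 'rV[R]_d.

Definition edist (x y : pt) : R :=
  Num.sqrt (\sum_(i < d) (x ord0 i - y ord0 i) ^+ 2).

Definition dist_set (x : pt) (C : seq pt) : R :=
  match C with
  | [::] => 0
  | c0 :: cs => foldr Num.min (edist x c0) [seq edist x c | c <- cs]
  end.

Definition topsum (p : nat) (s : seq R) : R :=
  \sum_(i < p) nth 0 (sort (fun a b : R => b <= a) s) i.

Definition cost (p : nat) (Y : seq pt) (C : seq pt) : R :=
  topsum p [seq dist_set y C | y <- Y].

Definition on_line (a v z : pt) : Prop := exists t : R, z = a + t *: v.

Variable (n : nat) (X : 'I_n -> pt).

Definition mean (Y : {set 'I_n}) : pt :=
  (#|Y|%:R)^-1 *: \sum_(i in Y) X i.

Definition cum_err (Y : {set 'I_n}) : R :=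
  \sum_(i in Y) edist (X i) (mean Y).

(* I(Y): the smallest closed segment containing Y (Y collinear), i.e. the
   union of the segments [y1, y2] with y1, y2 in Y *)
Definition in_hull (Y : {set 'I_n}) (z : pt) : Prop :=
  exists i1 i2 : 'I_n, [/\ i1 \in Y, i2 \in Y &
    exists2 t : R, 0 <= t <= 1 & z = (1 - t) *: X i1 + t *: X i2].

(* len(I(Y)): length of the smallest segment containing the collinear set Y,
   i.e. the largest distance between two of its points *)
Definition seg_len (Y : {set 'I_n}) : R :=
  \big[Num.max/0]_(i in Y) \big[Num.max/0]_(j in Y) edist (X i) (X j).

End Defs.

From HB Require Import structures.
From mathcomp Require Import all_boot all_order all_algebra.
From mathcomp Require Import reals.
From mathcomp Require Import ring lra.
Import Order.TTheory GRing.Theory Num.Theory.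
Local Open Scope ring_scope.

Set Implicit Arguments.
Unset Strict Implicit.
Unset Printing Implicit Defensive.

(* For a point x_j of a block Y let f_j = d(x_j, C) and g_j = d(mu(Y), C); the two
   costs are the top-p sums of the g_j and of the f_j.  A top-p sum equals
   min_theta (p theta + sum_j (a_j - theta)_+), so it is p-Lipschitz for the sup norm
   and two top-p sums can be compared through the sums of (. - theta)_+ at a common
   theta.  On blocks with len(I(Y)) <= alpha eps s / p, replacing f by g costs at most
   alpha eps s, because |f_j - g_j| <= |x_j - mu(Y)| <= len(I(Y)).  On the other
   blocks delta(Y) <= alpha eps t_l / k.  If such a block lies in the Voronoi cell of
   one center c, then t |-> (d(a + t v, c) - theta)_+ is convex along its line: by
   Jensen the block only helps in one direction, and in the other it contributes at
   most delta(Y) / |v| times the increase of the slope over I(Y).  The slopes are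
   monotone and bounded by |v| and the segments I(Y) are disjoint, so these increases
   add up to at most 2 |v| per line and center.  A block meeting several cells
   contributes at most delta(Y), and as Voronoi cells meet a line in intervals there are
   at most k such blocks per line.  Hence beta = 3 alpha works. *)

Section Euclid.
Variables (R : realType) (d : nat).
Local Notation pt := 'rV[R]_d.
Implicit Types (u w x y z c : pt).

Definition dot u w : R := \sum_(i < d) u ord0 i * w ord0 i.

Definition nrm u : R := Num.sqrt (dot u u).

Lemma dotC u w : dot u w = dot w u.
Proof. by apply: eq_bigr => i _; rewrite mulrC. Qed.

Lemma dotDl u1 u2 w : dot (u1 + u2) w = dot u1 w + dot u2 w.
Proof. by rewrite /dot -big_split; apply: eq_bigr => i _; rewrite !mxE mulrDl. Qed.

Lemma dotZl (k : R) u w : dot (k *: u) w = k * dot u w.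
Proof. by rewrite /dot mulr_sumr; apply: eq_bigr => i _; rewrite !mxE mulrA. Qed.

Lemma dotNl u w : dot (- u) w = - dot u w.
Proof. by rewrite -scaleN1r dotZl mulN1r. Qed.

Lemma dotBl u1 u2 w : dot (u1 - u2) w = dot u1 w - dot u2 w.
Proof. by rewrite dotDl dotNl. Qed.

Lemma dot_suml (I : Type) (r : seq I) (P : pred I) (F : I -> pt) w :
  dot (\sum_(i <- r | P i) F i) w = \sum_(i <- r | P i) dot (F i) w.
Proof.
apply: (big_morph (dot^~ w)) => [u1 u2|]; first exact: dotDl.
by rewrite /dot big1 // => i _; rewrite mxE mul0r.
Qed.

Lemma dotDr u w1 w2 : dot u (w1 + w2) = dot u w1 + dot u w2.
Proof. by rewrite dotC dotDl !(dotC u). Qed.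

Lemma dotZr (k : R) u w : dot u (k *: w) = k * dot u w.
Proof. by rewrite dotC dotZl dotC. Qed.

Lemma dotBr u w1 w2 : dot u (w1 - w2) = dot u w1 - dot u w2.
Proof. by rewrite dotC dotBl !(dotC u). Qed.

Lemma dot_ge0 u : 0 <= dot u u.
Proof. by apply: sumr_ge0 => i _; rewrite -expr2 sqr_ge0. Qed.

Lemma dot_eq0 u : (dot u u == 0) = (u == 0).
Proof.
apply/eqP/eqP => [u0|->]; last by rewrite -(scale0r 0) dotZl mul0r.
apply/rowP => i; rewrite mxE.
have sq_ge0 j : true -> 0 <= u ord0 j * u ord0 j by rewrite -expr2 sqr_ge0.
by have /eqP := psumr_eq0P sq_ge0 u0 (i := i) isT; rewrite mulf_eq0 orbb => /eqP.
Qed.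

Lemma nrm_ge0 u : 0 <= nrm u.
Proof. exact: sqrtr_ge0. Qed.

Lemma nrm_sqr u : nrm u ^+ 2 = dot u u.
Proof. by rewrite sqr_sqrtr // dot_ge0. Qed.

Lemma nrm_gt0 u : u != 0 -> 0 < nrm u.
Proof. by move=> u0; rewrite sqrtr_gt0 lt_def dot_ge0 dot_eq0 u0. Qed.

Lemma nrmZ (k : R) u : nrm (k *: u) = `|k| * nrm u.
Proof. by rewrite /nrm dotZl dotZr mulrA -expr2 sqrtrM ?sqr_ge0 // sqrtr_sqr. Qed.

Lemma dot_le_nrm u w : dot u w <= nrm u * nrm w.
Proof.
have [->|u0] := eqVneq u 0; first by rewrite -(scale0r 0) dotZl mul0r mulr_ge0 ?nrm_ge0.
have [->|w0] := eqVneq w 0; first by rewrite -(scale0r 0) dotZr mul0r mulr_ge0 ?nrm_ge0.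
(* 0 <= |nrm w u - nrm u w|^2 = 2 P (P - dot u w), where P = nrm u * nrm w *)
have := dot_ge0 (nrm w *: u - nrm u *: w).
rewrite dotBl !dotBr !dotZl !dotZr (dotC w u) -!nrm_sqr.
have := mulr_gt0 (nrm_gt0 u0) (nrm_gt0 w0).
move: (nrm u) (nrm w) (dot u w) => a b x ab_gt0 h.
have : 0 <= (a * b) * (a * b - x) by nra.
by rewrite pmulr_rge0 // subr_ge0.
Qed.

Lemma dot_abs_le_nrm u w : `|dot u w| <= nrm u * nrm w.
Proof.
rewrite ler_norml dot_le_nrm andbT lerNl -dotNl.
by rewrite (le_trans (dot_le_nrm _ _)) // -scaleN1r nrmZ normrN1 mul1r.
Qed.

Lemma nrmD u w : nrm (u + w) <= nrm u + nrm w.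
Proof.
rewrite -ler_sqr ?nnegrE ?addr_ge0 ?nrm_ge0 // sqrrD !nrm_sqr dotDl !dotDr (dotC w u).
by have := dot_le_nrm u w; lra.
Qed.

Lemma nrm_sum (I : Type) (r : seq I) (P : pred I) (F : I -> pt) :
  nrm (\sum_(i <- r | P i) F i) <= \sum_(i <- r | P i) nrm (F i).
Proof.
elim/big_ind2: _ => [|u1 x1 u2 x2 h1 h2|//]; last exact: le_trans (nrmD _ _) (lerD h1 h2).
by rewrite -(scale0r 0) nrmZ normr0 mul0r.
Qed.

Lemma edist_nrm x y : edist x y = nrm (x - y).
Proof.
by rewrite /edist /nrm /dot; congr Num.sqrt; apply: eq_bigr => i _; rewrite !mxE expr2.
Qed.

Lemma edist_ge0 x y : 0 <= edist x y.
Proof. exact: sqrtr_ge0. Qed.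

Lemma edistC x y : edist x y = edist y x.
Proof. by rewrite !edist_nrm -opprB -scaleN1r nrmZ normrN1 mul1r. Qed.

Lemma edist_triangle x y z : edist x z <= edist x y + edist y z.
Proof. by rewrite !edist_nrm (le_trans _ (nrmD _ _)) // addrA subrK. Qed.

Lemma edist_line (a v : pt) (t t' : R) :
  edist (a + t *: v) (a + t' *: v) = `|t - t'| * nrm v.
Proof. by rewrite edist_nrm opprD addrACA subrr add0r -scalerBl nrmZ. Qed.

Lemma closerE z c c' :
  (edist z c <= edist z c') = (dot c c - dot c' c' <= 2 * dot z (c - c')).
Proof.
rewrite !edist_nrm /nrm ler_sqrt ?dot_ge0 // !dotBl !dotBr (dotC c z) (dotC c' z).
by apply/idP/idP; lra.
Qed.

Lemma closer_segment (a v c c' : pt) (t1 t2 t : R) : t1 <= t <= t2 ->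
  edist (a + t1 *: v) c <= edist (a + t1 *: v) c' ->
  edist (a + t2 *: v) c <= edist (a + t2 *: v) c' ->
  edist (a + t *: v) c <= edist (a + t *: v) c'.
Proof.
rewrite !closerE !dotDl !dotZl => /andP[t1t tt2].
move: (dot a (c - c')) (dot v (c - c')) => A B.
by have [B0|B0] := leP 0 B; nra.
Qed.

End Euclid.

Section Segments.
Variables (R : realType) (d n : nat) (X : 'I_n -> 'rV[R]_d).
Local Notation pt := 'rV[R]_d.
Implicit Types (Y : {set 'I_n}) (c : pt).

Lemma mean_line Y (a v : pt) (s : 'I_n -> R) : (0 < #|Y|)%N ->
  {in Y, forall i, X i = a + s i *: v} ->
  mean X Y = a + (#|Y|%:R^-1 * \sum_(i in Y) s i) *: v.
Proof.
move=> Y_gt0 XY; rewrite /mean (eq_bigr _ XY) big_split /= sumr_const -scaler_suml.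
by rewrite scalerDr scalerA -scaler_nat scalerA mulVf ?scale1r ?pnatr_eq0 -?lt0n.
Qed.

Lemma edist_le_seg_len Y i j : i \in Y -> j \in Y -> edist (X i) (X j) <= seg_len X Y.
Proof.
move=> iY jY; rewrite /seg_len (le_trans _ (le_bigmax_cond _ _ iY)) //.
exact: (le_bigmax_cond _ (fun j => edist (X i) (X j)) jY).
Qed.

Lemma edist_mean_le_seg_len Y j : j \in Y -> edist (X j) (mean X Y) <= seg_len X Y.
Proof.
move=> jY; have Y_gt0 : (0 < #|Y|%:R :> R) by rewrite ltr0n; apply/card_gt0P; exists j.
rewrite edist_nrm; have -> : X j - mean X Y = #|Y|%:R^-1 *: \sum_(i in Y) (X j - X i).
  rewrite sumrB sumr_const scalerBr /mean -scaler_nat scalerA mulVf ?gt_eqF //.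
  by rewrite scale1r.
rewrite nrmZ ger0_norm ?invr_ge0 ?ler0n // ler_pdivrMl //.
apply: le_trans (nrm_sum _ _ _) _; rewrite mulr_natl -sumr_const.
by apply: ler_sum => i iY; rewrite -edist_nrm edist_le_seg_len.
Qed.

Lemma closer_mean Y c c' : (0 < #|Y|)%N ->
  {in Y, forall i, edist (X i) c <= edist (X i) c'} ->
  edist (mean X Y) c <= edist (mean X Y) c'.
Proof.
move=> Y_gt0 closerY; rewrite closerE /mean dotZl dot_suml mulrCA ler_pdivlMl ?ltr0n //.
rewrite mulr_natl -sumr_const mulr_sumr; apply: ler_sum => i iY.
by rewrite -closerE closerY.
Qed.

Lemma in_hull_line Y (a v : pt) (s : 'I_n -> R) i1 i2 (t : R) :
  i1 \in Y -> i2 \in Y -> X i1 = a + s i1 *: v -> X i2 = a + s i2 *: v ->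
  s i1 <= t <= s i2 -> in_hull X Y (a + t *: v).
Proof.
move=> i1Y i2Y Xi1 Xi2 /andP[le1 le2]; exists i1, i2; split=> //.
have [eq12|ne12] := eqVneq (s i1) (s i2).
  exists 0; first by rewrite lexx ler01.
  by rewrite subr0 scale1r scale0r addr0 Xi1; congr (_ + _ *: _); lra.
have gap : 0 < s i2 - s i1 by rewrite subr_gt0 lt_def eq_sym ne12 (le_trans le1 le2).
exists ((t - s i1) / (s i2 - s i1)).
  rewrite divr_ge0 ?subr_ge0 ?(le_trans le1 le2) //= ler_pdivrMr // mul1r.
  by rewrite lerB.
rewrite Xi1 Xi2; apply/rowP => k; rewrite !mxE; field; exact: lt0r_neq0.
Qed.

End Segments.

Section DistanceToCenters.
Variables (R : realType) (d : nat) (C : seq 'rV[R]_d).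
Local Notation pt := 'rV[R]_d.
Implicit Types (x y z c : pt).

Definition closest z c := (c \in C) && all (fun c' => edist z c <= edist z c') C.

Lemma dist_set_le z c : c \in C -> dist_set z C <= edist z c.
Proof.
case: C => [//|c0 cs] /=; rewrite inE => /predU1P[->|/(map_f (edist z))].
  by elim: cs => //= c1 cs IH; rewrite ge_min IH orbT.
elim: cs => //= c1 cs IH; rewrite inE => /predU1P[<-|/IH le]; rewrite ge_min ?lexx //.
by rewrite le orbT.
Qed.

Lemma dist_set_attained z : C != [::] -> exists2 c, c \in C & dist_set z C = edist z c.
Proof.
case: C => [//|c0 cs] _ /=.
elim: cs => [|c1 cs [c cC eq_c]] /=; first by exists c0; rewrite ?mem_head.
rewrite eq_c /Num.min; case: ifP => _; first by exists c1; rewrite ?inE ?eqxx ?orbT.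
by exists c => //; move: cC; rewrite !inE => /orP[] ->; rewrite ?orbT.
Qed.

Lemma dist_set_closest z c : closest z c -> dist_set z C = edist z c.
Proof.
case/andP=> cC /allP closest_c; apply: le_anti; rewrite dist_set_le //=.
have [|c' c'C ->] := dist_set_attained z; last exact: closest_c.
by apply: contraTneq cC => ->.
Qed.

Lemma has_closest z : C != [::] -> has (closest z) C.
Proof.
move=> C_neq0; have [c cC dzc] := dist_set_attained z C_neq0.
apply/hasP; exists c; rewrite // /closest cC; apply/allP => c' c'C.
by rewrite -dzc dist_set_le.
Qed.

Lemma dist_set_lipschitz x y : `|dist_set x C - dist_set y C| <= edist x y.
Proof.
have [->|C_neq0] := eqVneq C [::]; first by rewrite subrr normr0 edist_ge0.
have [cx cxC dx] := dist_set_attained x C_neq0.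
have [cy cyC dy] := dist_set_attained y C_neq0.
have := dist_set_le x cyC; have := dist_set_le y cxC; rewrite dx dy.
have := edist_triangle x y cy; have := edist_triangle y x cx; rewrite (edistC y x).
by rewrite ler_norml; lra.
Qed.

End DistanceToCenters.

Section Subgradients.
Variable R : realFieldType.
Implicit Types (f sigma : R -> R) (theta x y : R).

Definition ramp theta x := Num.max (x - theta) 0.

Definition subgradient f sigma := forall x y, f x + sigma x * (y - x) <= f y.

Definition ramp_slope f sigma theta x := if theta < f x then sigma x else 0.

Lemma ramp_ge theta x : x - theta <= ramp theta x.
Proof. by rewrite le_max lexx. Qed.

Lemma ramp_ge0 theta x : 0 <= ramp theta x.
Proof. by rewrite le_max lexx orbT. Qed.

Lemma rampE theta x : ramp theta x = if theta < x then x - theta else 0.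
Proof.
rewrite /ramp; case: ltP => h; first by rewrite max_l // subr_ge0 ltW.
by rewrite max_r // subr_le0.
Qed.

Lemma ramp_homo theta : {homo ramp theta : x y / x <= y}.
Proof. by move=> x y le_xy; rewrite /ramp ge_max le_max lerB // le_max lexx !orbT. Qed.

Lemma ramp_shift theta l x : ramp (theta + l) x = ramp theta (x - l).
Proof. by rewrite /ramp opprD addrA addrAC. Qed.

Lemma ramp_lipschitz theta x y : `|ramp theta x - ramp theta y| <= `|x - y|.
Proof.
have -> : x - y = (x - theta) - (y - theta) by rewrite opprB addrA subrK.
rewrite /ramp; move: (x - theta) (y - theta) => a b.
have := ler_norm (a - b); have := ler_norm (b - a); rewrite distrC ler_norml.
by case: (leP a 0) => ha; case: (leP b 0) => hb;
  rewrite ?(max_idPr ha) ?(max_idPr hb) ?(max_idPl (ltW ha)) ?(max_idPl (ltW hb)); lra.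
Qed.

Lemma subgradient_homo f sigma : subgradient f sigma -> {homo sigma : x y / x <= y}.
Proof.
move=> sub x y; rewrite le_eqVlt => /predU1P[->//|lt_xy].
have : 0 <= (sigma y - sigma x) * (y - x) by have := sub x y; have := sub y x; lra.
by rewrite pmulr_lge0 ?subr_gt0 // subr_ge0.
Qed.

Lemma subgradient_ramp f sigma theta : subgradient f sigma ->
  subgradient (fun x => ramp theta (f x)) (ramp_slope f sigma theta).
Proof.
move=> sub x y; have := ramp_ge theta (f y); have := ramp_ge0 theta (f y).
rewrite /ramp_slope [ramp theta (f x)]rampE; case: ltP => _; last lra.
by have := sub x y; lra.
Qed.

Section Averages.
Variables (f sigma : R -> R) (I : finType) (A : {pred I}) (x : I -> R) (mu : R).
Hypotheses (sub : subgradient f sigma) (mu_mean : \sum_(i in A) (x i - mu) = 0).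

Lemma subgradient_jensen : \sum_(i in A) (f mu - f (x i)) <= 0.
Proof.
apply: le_trans (_ : \sum_(i in A) sigma mu * (mu - x i) <= 0).
  by apply: ler_sum => i _; have := sub mu (x i); lra.
rewrite -mulr_sumr; have -> : \sum_(i in A) (mu - x i) = - \sum_(i in A) (x i - mu).
  by rewrite -sumrN; apply: eq_bigr => i _; rewrite opprB.
by rewrite mu_mean oppr0 mulr0.
Qed.

Lemma subgradient_spread lo hi : {in A, forall i, lo <= x i <= hi} ->
  \sum_(i in A) (f (x i) - f mu) <= (sigma hi - sigma lo) * \sum_(i in A) `|x i - mu|.
Proof.
move=> x_in; have mono := subgradient_homo sub.
apply: le_trans (_ : _ <= \sum_(i in A) sigma (x i) * (x i - mu)) _.
  by apply: ler_sum => i _; have := sub (x i) mu; lra.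
(* Subtracting sigma lo times the vanishing sum of deviations costs nothing. *)
have -> : \sum_(i in A) sigma (x i) * (x i - mu) =
          \sum_(i in A) (sigma (x i) - sigma lo) * (x i - mu).
  by rewrite [RHS](eq_bigr _ (fun i _ => mulrBl _ _ _)) sumrB -mulr_sumr mu_mean mulr0 subr0.
rewrite mulr_sumr; apply: ler_sum => i /x_in /andP[lo_x x_hi].
have := mono _ _ lo_x; have := mono _ _ x_hi.
have /andP[] : - `|x i - mu| <= x i - mu <= `|x i - mu| by rewrite -ler_norml.
move: (sigma _) (sigma lo) (sigma hi) (x i - mu) `|x i - mu| => s sl sh e ae.
nra.
Qed.

End Averages.

End Subgradients.

Section Increments.
Variables (R : realFieldType) (S : R -> R) (M : R).
Hypotheses (S_homo : {homo S : x y / x <= y}) (S_bounded : forall x, `|S x| <= M).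

Lemma sum_increments_chain (I : Type) (lo hi : I -> R) (s : seq I) (x0 : R) :
  pairwise (fun i j => hi i <= lo j) s -> all (fun i => x0 <= lo i) s ->
  \sum_(i <- s) (S (hi i) - S (lo i)) <= M - S x0.
Proof.
elim: s x0 => [|i s IH] x0 /=.
  by rewrite big_nil subr_ge0; have := S_bounded x0; rewrite ler_norml => /andP[].
move=> /andP[hi_s pw] /andP[x0_lo _]; rewrite big_cons.
by have := IH (hi i) pw hi_s; have := S_homo x0_lo; lra.
Qed.

Lemma sum_increments_le (I : eqType) (lo hi : I -> R) (s : seq I) : uniq s ->
  {in s &, forall i j, i != j -> hi i <= hi j -> hi i <= lo j} ->
  \sum_(i <- s) (S (hi i) - S (lo i)) <= M *+ 2.
Proof.
move=> s_uniq sep; set t := sort (fun i j => hi i <= hi j) s.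
have perm_t : perm_eq t s by rewrite perm_sort.
have pw : pairwise (fun i j => hi i <= lo j) t.
  apply: (@sub_in_pairwise _ (mem s) [rel i j | (hi i <= hi j) && (i != j)]).
  - by move=> i j iS jS /andP[hij ij]; apply: sep.
  - by apply/allP => i; rewrite (perm_mem perm_t).
  rewrite pairwise_relI -uniq_pairwise (perm_uniq perm_t) s_uniq andbT.
  by rewrite -sorted_pairwise ?sort_sorted // => [i j|j i k]; [exact: le_total | exact: le_trans].
set x0 := \big[Num.min/0]_(i <- t) lo i.
have x0_lo : all (fun i => x0 <= lo i) t by apply/allP => i it; apply: ge_bigmin_seq.
rewrite -(perm_big _ perm_t) (le_trans (sum_increments_chain pw x0_lo)) //.
by have := S_bounded x0; rewrite mulr2n ler_norml; lra.
Qed.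

End Increments.

Section TopSums.
Variables (R : realType) (p : nat).
Implicit Types (s : seq R) (theta : R).

Local Notation sort_desc s := (sort (fun x y : R => y <= x) s).

Lemma sum_sort_desc (F : R -> R) s :
  \sum_(x <- s) F x = \sum_(0 <= i < size s) F (nth 0 (sort_desc s) i).
Proof.
have perm_s : perm_eq (sort_desc s) s by rewrite perm_sort.
by rewrite -(perm_big _ perm_s) (big_nth 0) size_sort.
Qed.

Lemma topsum_le_ramp s theta : (p <= size s)%N ->
  topsum p s <= p%:R * theta + \sum_(x <- s) ramp theta x.
Proof.
move=> ps; rewrite sum_sort_desc /topsum (big_cat_nat (leq0n p) ps) /= -(big_mkord xpredT).
have -> : p%:R * theta = \sum_(0 <= i < p) theta by rewrite sumr_const_nat subn0 mulr_natl.
rewrite addrA -big_split /= ler_wpDr ?sumr_ge0 // => [i _|]; first exact: ramp_ge0.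
by apply: ler_sum => i _; have := ramp_ge theta (nth 0 (sort_desc s) i); lra.
Qed.

Lemma topsum_ramp s : (0 < p <= size s)%N ->
  exists theta, topsum p s = p%:R * theta + \sum_(x <- s) ramp theta x.
Proof.
case/andP=> p_gt0 ps; set t := sort_desc s; exists (nth 0 t p.-1).
have t_sorted : sorted (fun x y => y <= x) t by apply: sort_sorted => x y; exact: le_total.
have nth_anti i j : (i <= j)%N -> (j < size s)%N -> nth 0 t j <= nth 0 t i.
  move=> ij js; apply: (sorted_leq_nth _ _ 0 t_sorted) => //; rewrite ?inE ?size_sort //.
  - by move=> x y z /= yx zy; exact: le_trans zy yx.
  - exact: leq_ltn_trans js.
rewrite sum_sort_desc (big_cat_nat (leq0n p) ps) /= -/t.
have -> : \sum_(p <= i < size s) ramp (nth 0 t p.-1) (nth 0 t i) = 0.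
  rewrite big_nat big1 // => i /andP[pi i_s].
  by rewrite rampE ltNge nth_anti // (leq_trans (leq_pred p)).
rewrite addr0.
have -> : p%:R * nth 0 t p.-1 = \sum_(0 <= i < p) nth 0 t p.-1.
  by rewrite sumr_const_nat subn0 mulr_natl.
rewrite /topsum -/t -(big_mkord xpredT) -big_split !big_nat.
apply: eq_bigr => i /andP[_ ip] /=.
have ip' : (i <= p.-1)%N by rewrite -ltnS prednK.
have p1s : (p.-1 < size s)%N by rewrite prednK.
rewrite rampE lt_neqAle nth_anti // andbT.
by case: eqP => [->|_]; rewrite ?subrr ?addr0 // addrC subrK.
Qed.

Lemma topsum_sub_le (I : Type) (r : seq I) (F G : I -> R) : (0 < p <= size r)%N ->
  exists theta, topsum p (map F r) - topsum p (map G r) <=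
                \sum_(x <- r) (ramp theta (F x) - ramp theta (G x)).
Proof.
move=> /andP[p_gt0 pr].
have [|theta ->] := topsum_ramp (s := map G r); first by rewrite size_map p_gt0.
exists theta; have := topsum_le_ramp (s := map F r) theta; rewrite size_map => /(_ pr).
by rewrite sumrB !big_map; lra.
Qed.

Lemma topsum_lipschitz (I : Type) (r : seq I) (F G : I -> R) (l : R) : (p <= size r)%N ->
  (forall x, `|F x - G x| <= l) ->
  `|topsum p (map F r) - topsum p (map G r)| <= p%:R * l.
Proof.
move=> pr; have [->|p_gt0] := posnP p; first by rewrite /topsum !big_ord0 subrr normr0 mul0r.
suff le_FG F' G' : (forall x, `|F' x - G' x| <= l) ->
    topsum p (map F' r) - topsum p (map G' r) <= p%:R * l.
  move=> FG; rewrite ler_norml le_FG // andbT lerNl opprB le_FG // => x.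
  by rewrite distrC.
move=> FG; have [|theta ->] := topsum_ramp (s := map G' r); first by rewrite size_map p_gt0.
have := topsum_le_ramp (s := map F' r) (theta + l); rewrite size_map => /(_ pr).
suff : \sum_(x <- map F' r) ramp (theta + l) x <= \sum_(x <- map G' r) ramp theta x.
  by rewrite mulrDr; lra.
rewrite !big_map; apply: ler_sum => x _; rewrite ramp_shift ramp_homo //.
by have := FG x; rewrite ler_norml => /andP[_]; lra.
Qed.

End TopSums.

Section LineDistance.
Variables (R : realType) (d : nat) (a v c : 'rV[R]_d).

Definition ldist (t : R) := edist (a + t *: v) c.

Definition ldist_slope (t : R) := dot (a + t *: v - c) v / ldist t.

Lemma subgradient_ldist : subgradient ldist ldist_slope.
Proof.
move=> x y; rewrite /ldist_slope /ldist !edist_nrm.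
have -> : a + y *: v - c = (a + x *: v - c) + (y - x) *: v.
  by apply/rowP => i; rewrite !mxE; ring.
set u := a + x *: v - c; have [u0|u_neq0] := eqVneq (nrm u) 0.
  by rewrite u0 invr0 mulr0 mul0r add0r nrm_ge0.
have u_gt0 : 0 < nrm u by rewrite lt_def u_neq0 nrm_ge0.
have := dot_le_nrm u (u + (y - x) *: v); rewrite dotDr dotZr -nrm_sqr => cs.
rewrite -(ler_pM2l u_gt0); apply: le_trans cs.
suff -> : nrm u * (nrm u + dot u v / nrm u * (y - x)) = nrm u ^+ 2 + (y - x) * dot u v.
  by rewrite lexx.
by field.
Qed.

Lemma ldist_slope_bound t : `|ldist_slope t| <= nrm v.
Proof.
rewrite /ldist_slope /ldist edist_nrm; set u := a + t *: v - c.
have [u0|u_neq0] := eqVneq (nrm u) 0; first by rewrite u0 invr0 mulr0 normr0 nrm_ge0.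
have u_gt0 : 0 < nrm u by rewrite lt_def u_neq0 nrm_ge0.
by rewrite normrM normfV (gtr0_norm u_gt0) ler_pdivrMr // mulrC dot_abs_le_nrm.
Qed.

End LineDistance.

Section FiniteCounting.
Variables (T : finType) (U : eqType).

Lemma card_le_size_inj (A : {pred T}) (f : T -> U) (s : seq U) :
  {in A &, injective f} -> {in A, forall x, f x \in s} -> (#|A| <= size s)%N.
Proof.
move=> f_inj f_s; rewrite cardE -(size_map f); apply: uniq_leq_size.
  by rewrite map_inj_in_uniq ?enum_uniq // => x y; rewrite !mem_enum; apply: f_inj.
by move=> _ /mapP[x xA ->]; apply: f_s; rewrite -mem_enum.
Qed.

Lemma sum_partition_seq (R : nmodType) (P : pred T) (f : T -> U) (s : seq U) (F : T -> R) :
  uniq s -> (forall x, P x -> f x \in s) ->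
  \sum_(x | P x) F x = \sum_(u <- s) \sum_(x | P x && (f x == u)) F x.
Proof.
move=> s_uniq f_s; rewrite [RHS](exchange_big_dep P) /= => [|u x _ /andP[]//].
apply: eq_bigr => x Px; rewrite big_const_seq.
have -> : count (fun u => P x && (f x == u)) s = 1%N.
  by rewrite Px (eq_count (a2 := pred1 (f x))) ?count_uniq_mem ?f_s // => u /=; rewrite eq_sym.
by rewrite /= addr0.
Qed.

End FiniteCounting.

Section Blocks.
Variables (R : realType) (d n m : nat) (X : 'I_n -> 'rV[R]_d).
Variables (a v : 'I_m -> 'rV[R]_d) (lab : 'I_n -> 'I_m) (grp : 'I_n -> nat).
Local Notation pt := 'rV[R]_d.
Implicit Types (i j : 'I_n).

Definition block j := [set i | grp i == grp j].

Hypothesis X_on_line : forall j, on_line (a (lab j)) (v (lab j)) (X j).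
Hypothesis grp_lab : forall j j', grp j = grp j' -> lab j = lab j'.
Hypothesis hulls_disjoint : forall j j', grp j <> grp j' -> lab j = lab j' ->
  ~ (exists z, in_hull X (block j) z /\ in_hull X (block j') z).
Hypothesis v_neq0 : forall l, v l != 0.

Lemma mem_block i j : (i \in block j) = (grp i == grp j).
Proof. by rewrite inE. Qed.

Lemma block_id j : j \in block j.
Proof. by rewrite mem_block. Qed.

Lemma block_sym i j : (i \in block j) = (j \in block i).
Proof. by rewrite !mem_block eq_sym. Qed.

Lemma block_eq i j : i \in block j -> block i = block j.
Proof. by rewrite mem_block => /eqP eq_ij; apply/setP => k; rewrite !mem_block eq_ij. Qed.

Lemma block_gt0 j : (0 < #|block j|)%N.
Proof. by apply/card_gt0P; exists j; rewrite block_id. Qed.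

Lemma lab_block i j : i \in block j -> lab i = lab j.
Proof. by rewrite mem_block => /eqP /grp_lab. Qed.

Definition leader j := [forall (i | i \in block j), (j <= i)%N].

Lemma leader_eq j1 j2 : leader j1 -> leader j2 -> grp j1 = grp j2 -> j1 = j2.
Proof.
move=> /forall_inP le1 /forall_inP le2 eq12; apply/val_inj/anti_leq.
by rewrite le1 ?le2 // mem_block eq12.
Qed.

Lemma exists_leader i : exists2 j, leader j & i \in block j.
Proof.
case: (arg_minnP val (block_id i)) => j ji j_min; exists j; last by rewrite block_sym.
by apply/forall_inP => k kj; rewrite j_min // -(block_eq ji).
Qed.

Lemma sum_leaders (F : 'I_n -> R) :
  \sum_i F i = \sum_(j | leader j) \sum_(i in block j) F i.
Proof.
rewrite (exchange_big_dep xpredT) //=; apply: eq_bigr => i _.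
have [j lj ij] := exists_leader i; rewrite (big_pred1 j) // => k /=.
apply/idP/eqP => [/andP[lk ik]|->]; last by rewrite lj ij.
by apply: leader_eq => //; move: ik ij; rewrite !mem_block => /eqP <- /eqP.
Qed.

Lemma on_line_param j : exists t : R, X j == a (lab j) + t *: v (lab j).
Proof. by have [t ->] := X_on_line j; exists t. Qed.

Definition param j : R := xchoose (on_line_param j).

Lemma X_block i j : i \in block j -> X i = a (lab j) + param i *: v (lab j).
Proof. by move=> ij; rewrite -(lab_block ij); apply/eqP/(xchooseP (on_line_param i)). Qed.

Definition avg j := #|block j|%:R^-1 * \sum_(i in block j) param i.

Lemma sum_dev_avg j : \sum_(i in block j) (param i - avg j) = 0.
Proof.
have N_gt0 : (0 < #|block j|%:R :> R) by rewrite ltr0n block_gt0.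
rewrite sumrB sumr_const /avg -mulr_natr; field; exact: lt0r_neq0.
Qed.

Lemma mean_block j : mean X (block j) = a (lab j) + avg j *: v (lab j).
Proof. by apply: mean_line (block_gt0 j) _ => i /X_block. Qed.

Lemma cum_err_block j :
  cum_err X (block j) = nrm (v (lab j)) * \sum_(i in block j) `|param i - avg j|.
Proof.
rewrite mulr_sumr; apply: eq_bigr => i ij.
by rewrite mean_block (X_block ij) edist_line mulrC.
Qed.

Definition lo_idx j := [arg min_(i < j in block j) param i]%O.
Definition hi_idx j := [arg max_(i > j in block j) param i]%O.
Definition lo j := param (lo_idx j).
Definition hi j := param (hi_idx j).

Lemma lo_idx_block j : lo_idx j \in block j.
Proof. by rewrite /lo_idx; case: (arg_minP param (block_id j)). Qed.

Lemma hi_idx_block j : hi_idx j \in block j.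
Proof. by rewrite /hi_idx; case: (arg_maxP param (block_id j)). Qed.

Lemma lo_le i j : i \in block j -> lo j <= param i.
Proof. by rewrite /lo /lo_idx; case: (arg_minP param (block_id j)) => k _ k_min /k_min. Qed.

Lemma le_hi i j : i \in block j -> param i <= hi j.
Proof. by rewrite /hi /hi_idx; case: (arg_maxP param (block_id j)) => k _ k_max /k_max. Qed.

Lemma block_separated j1 j2 : grp j1 != grp j2 -> lab j1 = lab j2 ->
  hi j1 <= hi j2 -> hi j1 < lo j2.
Proof.
move=> /eqP ne12 lab12 hi12; rewrite ltNge; apply/negP => lo2_hi1.
apply: (hulls_disjoint ne12 lab12); exists (a (lab j1) + hi j1 *: v (lab j1)); split.
  have Xhi := X_block (hi_idx_block j1).
  by apply: (in_hull_line (hi_idx_block j1) (hi_idx_block j1) Xhi Xhi); rewrite lexx.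
rewrite lab12; apply: (in_hull_line (s := param) (lo_idx_block j2) (hi_idx_block j2)).
- exact: X_block (lo_idx_block j2).
- exact: X_block (hi_idx_block j2).
- by rewrite lo2_hi1 hi12.
Qed.

Variable C : seq pt.
Hypothesis C_neq0 : C != [::].

Definition serves j c := [forall (i | i \in block j), closest C (X i) c].

Definition one_cell j := has (serves j) C.

Definition cell_center j := nth 0 C (find (serves j) C).

Lemma cell_centerP j : one_cell j -> serves j (cell_center j).
Proof. exact: nth_find. Qed.

Lemma cell_center_mem j : one_cell j -> cell_center j \in C.
Proof. by move=> cj; rewrite mem_nth // -has_find. Qed.

Definition right_center j := nth 0 C (find (closest C (X (hi_idx j))) C).

Lemma right_centerP j : closest C (X (hi_idx j)) (right_center j).
Proof. exact/nth_find/has_closest. Qed.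

(* The later of two such blocks on a line lies between two points served by their
   common right center, so Voronoi convexity makes it one-cell. *)
Lemma right_center_inj j1 j2 : lab j1 = lab j2 -> ~~ one_cell j1 -> ~~ one_cell j2 ->
  right_center j1 = right_center j2 -> grp j1 = grp j2.
Proof.
wlog hi12 : j1 j2 / hi j1 <= hi j2.
  move=> sym lab12 n1 n2 rc12; have [hi12|/ltW hi21] := leP (hi j1) (hi j2).
    exact: sym.
  exact/esym/(sym j2 j1 hi21 (esym lab12) n2 n1 (esym rc12)).
move=> lab12 _ n2 rc12; apply/eqP; apply: contraNT n2 => ne12.
have sep := block_separated ne12 lab12 hi12.
have [cC /allP c_min2] := andP (right_centerP j2).
have [_ /allP c_min1] := andP (right_centerP j1); rewrite rc12 in c_min1.
apply/hasP; exists (right_center j2) => //; apply/forall_inP => i ij.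
rewrite /closest cC; apply/allP => c' c'C; rewrite (X_block ij).
apply: (@closer_segment _ _ _ _ _ _ (hi j1) (hi j2)).
- by rewrite (ltW (lt_le_trans sep (lo_le ij))) le_hi.
- by rewrite -lab12 -(X_block (hi_idx_block j1)) c_min1.
- by rewrite -(X_block (hi_idx_block j2)) c_min2.
Qed.

Definition dist_pt j := dist_set (X j) C.

Definition dist_mean j := dist_set (mean X (block j)) C.

Definition excess theta j :=
  \sum_(i in block j) (ramp theta (dist_pt i) - ramp theta (dist_mean i)).

Lemma excess_abs_le theta j : `|excess theta j| <= cum_err X (block j).
Proof.
apply: le_trans (ler_norm_sum _ _ _) _; apply: ler_sum => i ij.
rewrite /dist_mean (block_eq ij); apply: le_trans (ramp_lipschitz _ _ _) _.
exact: dist_set_lipschitz.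
Qed.

Definition cell_dist j := ldist (a (lab j)) (v (lab j)) (cell_center j).

Definition cell_slope theta j :=
  ramp_slope (cell_dist j) (ldist_slope (a (lab j)) (v (lab j)) (cell_center j)) theta.

Lemma excess_one_cell j theta : one_cell j -> excess theta j =
  \sum_(i in block j) (ramp theta (cell_dist j (param i)) - ramp theta (cell_dist j (avg j))).
Proof.
move=> /cell_centerP /forall_inP serves_c; apply: eq_bigr => i ij; congr (ramp _ _ - ramp _ _).
  by rewrite /dist_pt (dist_set_closest (serves_c i ij)) (X_block ij).
rewrite /dist_mean (block_eq ij) /cell_dist /ldist -mean_block.
apply: dist_set_closest; have [cC _] := andP (serves_c j (block_id j)).
rewrite /closest cC; apply/allP => c' c'C; apply: closer_mean (block_gt0 j) _ => k kj.
by have [_ /allP] := andP (serves_c k kj); apply.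
Qed.

Lemma lo_le_hi j : lo j <= hi j.
Proof. exact: lo_le (hi_idx_block j). Qed.

Lemma cell_slope_homo theta j : {homo cell_slope theta j : x y / x <= y}.
Proof. exact/subgradient_homo/subgradient_ramp/subgradient_ldist. Qed.

Lemma excess_one_cell_le theta j : one_cell j -> excess theta j <=
  cum_err X (block j) / nrm (v (lab j)) * (cell_slope theta j (hi j) - cell_slope theta j (lo j)).
Proof.
move=> cj; rewrite excess_one_cell // cum_err_block [nrm _ * _]mulrC.
rewrite mulfK ?(lt0r_neq0 (nrm_gt0 (v_neq0 _))) // mulrC.
have sub := subgradient_ramp theta (subgradient_ldist (a (lab j)) (v (lab j)) (cell_center j)).
by apply: (subgradient_spread sub (sum_dev_avg j)) => i ij; rewrite lo_le ?le_hi.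
Qed.

Lemma excess_one_cell_ge0 theta j : one_cell j -> 0 <= excess theta j.
Proof.
move=> cj; rewrite excess_one_cell // -oppr_le0 -sumrN.
under eq_bigr do rewrite opprB.
have sub := subgradient_ramp theta (subgradient_ldist (a (lab j)) (v (lab j)) (cell_center j)).
exact: subgradient_jensen sub (sum_dev_avg j).
Qed.

Hypothesis C_uniq : uniq C.
Variable tau : 'I_m -> R.
Hypothesis tau_ge0 : forall l, 0 <= tau l.

Lemma sum_straddling_le :
  \sum_(j | leader j && ~~ one_cell j) tau (lab j) <= (size C)%:R * \sum_l tau l.
Proof.
rewrite (partition_big lab xpredT) //= mulr_sumr; apply: ler_sum => l _.
rewrite (eq_bigr (fun _ => tau l)) => [|j /andP[_ /eqP->]//].
rewrite sumr_const mulr_natl ler_wpMn2l //.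
apply: (@card_le_size_inj _ _ _ right_center) => [j1 j2|j _].
  move=> /andP[/andP[l1 n1] /eqP lab1] /andP[/andP[l2 n2] /eqP lab2] rc12.
  by apply: leader_eq => //; apply: right_center_inj; rewrite ?lab1 ?lab2.
by have /andP[] := right_centerP j.
Qed.

Lemma sum_one_cell_le theta :
  \sum_(j | leader j && one_cell j)
     tau (lab j) / nrm (v (lab j)) * (cell_slope theta j (hi j) - cell_slope theta j (lo j))
  <= 2 * (size C)%:R * \sum_l tau l.
Proof.
rewrite (partition_big lab xpredT) //= mulr_sumr; apply: ler_sum => l _.
rewrite (sum_partition_seq (f := cell_center) _ C_uniq) => [|j /andP[/andP[_]]]; last first.
  by move=> /cell_center_mem.
apply: le_trans (_ : _ <= \sum_(c <- C) 2 * tau l) _; last first.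
  by rewrite big_const_seq iter_addr_0 count_predT -[X in X <= _]mulr_natr; lra.
apply: ler_sum => c _.
set S := ramp_slope (ldist (a l) (v l) c) (ldist_slope (a l) (v l) c) theta.
rewrite (eq_bigr (fun j => tau l / nrm (v l) * (S (hi j) - S (lo j)))); last first.
  by move=> j /andP[/andP[_ /eqP labj] /eqP cj]; rewrite /cell_slope /cell_dist labj cj.
have nv_gt0 := nrm_gt0 (v_neq0 l).
have S_homo : {homo S : x y / x <= y}.
  exact/subgradient_homo/subgradient_ramp/subgradient_ldist.
have S_bounded x : `|S x| <= nrm (v l).
  by rewrite /S /ramp_slope; case: ifP => _; rewrite ?normr0 ?nrm_ge0 ?ldist_slope_bound.
rewrite -mulr_sumr -big_filter; set s := [seq j <- _ | _].
have sep : {in s &, forall j1 j2, j1 != j2 -> hi j1 <= hi j2 -> hi j1 <= lo j2}.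
  move=> j1 j2; rewrite !mem_filter => /andP[/andP[/andP[/andP[ld1 _] /eqP lab1] _] _].
  move=> /andP[/andP[/andP[/andP[ld2 _] /eqP lab2] _] _] ne12 hi12.
  apply/ltW/block_separated => //; last by rewrite lab1 lab2.
  by apply: contra ne12 => /eqP g12; apply/eqP/leader_eq.
have := sum_increments_le S_homo S_bounded (filter_uniq _ (index_enum_uniq _)) sep.
move=> /(ler_wpM2l (divr_ge0 (tau_ge0 l) (ltW nv_gt0))) /le_trans; apply.
suff -> : tau l / nrm (v l) * (nrm (v l) *+ 2) = 2 * tau l by [].
by rewrite mulr2n; field; exact: lt0r_neq0.
Qed.

Variable ell : R.
Hypothesis ell_ge0 : 0 <= ell.
Hypothesis short_or_tight :
  forall j, seg_len X (block j) <= ell \/ cum_err X (block j) <= tau (lab j).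

Definition short j := seg_len X (block j) <= ell.

Definition dist_mixed j := if short j then dist_mean j else dist_pt j.

Lemma sum_block_mixed theta j :
  \sum_(i in block j) (ramp theta (dist_mixed i) - ramp theta (dist_mean i)) =
  if short j then 0 else excess theta j.
Proof.
rewrite /dist_mixed /short; case: ifP => sh.
  by rewrite big1 // => i ij; rewrite (block_eq ij) sh subrr.
by apply: eq_bigr => i ij; rewrite (block_eq ij) sh.
Qed.

Lemma cum_err_long j : ~~ short j -> cum_err X (block j) <= tau (lab j).
Proof. by rewrite /short; case: (short_or_tight j) => ->. Qed.

Definition block_bound theta j := if one_cell j
  then tau (lab j) / nrm (v (lab j)) * (cell_slope theta j (hi j) - cell_slope theta j (lo j))
  else tau (lab j).

Lemma sum_block_mixed_le theta j :
  \sum_(i in block j) (ramp theta (dist_mixed i) - ramp theta (dist_mean i)) <=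
  block_bound theta j.
Proof.
rewrite sum_block_mixed /block_bound; have nv_gt0 := nrm_gt0 (v_neq0 (lab j)).
have slope_ge0 : 0 <= cell_slope theta j (hi j) - cell_slope theta j (lo j).
  by rewrite subr_ge0; apply: cell_slope_homo; exact: lo_le_hi.
case: ifP => [_|/negbT/cum_err_long tight]; case: ifP => cj.
- by rewrite mulr_ge0 // divr_ge0 ?tau_ge0 ?nrm_ge0.
- exact: tau_ge0.
- apply: le_trans (excess_one_cell_le theta cj) _.
  have inv_ge0 : 0 <= (nrm (v (lab j)))^-1 by rewrite invr_ge0 ltW.
  by apply: ler_wpM2r slope_ge0 _ _ _; apply: ler_wpM2r inv_ge0 _ _ _.
- exact: le_trans (ler_norm _) (le_trans (excess_abs_le theta j) tight).
Qed.

Lemma sum_block_mean_le theta j :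
  \sum_(i in block j) (ramp theta (dist_mean i) - ramp theta (dist_mixed i)) <=
  if ~~ one_cell j then tau (lab j) else 0.
Proof.
rewrite -[X in X <= _]opprK -sumrN; under eq_bigr do rewrite opprB.
rewrite sum_block_mixed; case: ifP => [_|/negbT/cum_err_long tight].
  by rewrite oppr0; case: ifP => // _; exact: tau_ge0.
case: ifPn => [_|/negPn cj]; last by rewrite oppr_le0 excess_one_cell_ge0.
by have := excess_abs_le theta j; have := ler_norm (- excess theta j); rewrite normrN; lra.
Qed.

Lemma topsum_mixed_le p : (0 < p <= n)%N ->
  topsum p (map dist_mixed (enum 'I_n)) - topsum p (map dist_mean (enum 'I_n)) <=
  3 * (size C)%:R * \sum_l tau l.
Proof.
move=> pn; have [|theta le_sum] := topsum_sub_le (p := p) (r := enum 'I_n) dist_mixed dist_mean.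
  by rewrite size_enum_ord.
apply: le_trans le_sum _; rewrite big_enum /= (eq_bigl xpredT) // sum_leaders.
apply: le_trans (ler_sum _ (fun j _ => sum_block_mixed_le theta j)) _.
rewrite (bigID one_cell) /=.
under eq_bigr => j /andP[_ cj] do rewrite /block_bound cj.
under [X in _ + X]eq_bigr => j /andP[_ /negbTE cj] do rewrite /block_bound cj.
by have := sum_one_cell_le theta; have := sum_straddling_le; lra.
Qed.

Lemma topsum_mean_le p : (0 < p <= n)%N ->
  topsum p (map dist_mean (enum 'I_n)) - topsum p (map dist_mixed (enum 'I_n)) <=
  (size C)%:R * \sum_l tau l.
Proof.
move=> pn; have [|theta le_sum] := topsum_sub_le (p := p) (r := enum 'I_n) dist_mean dist_mixed.
  by rewrite size_enum_ord.
apply: le_trans le_sum _; rewrite big_enum /= (eq_bigl xpredT) // sum_leaders.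
apply: le_trans (ler_sum _ (fun j _ => sum_block_mean_le theta j)) _.
by rewrite -big_mkcondr; exact: sum_straddling_le.
Qed.

Theorem cost_blocks_approx p : (0 < p <= n)%N ->
  `|cost p [seq mean X (block j) | j <- enum 'I_n] C - cost p [seq X j | j <- enum 'I_n] C|
    <= p%:R * ell + 3 * (size C)%:R * \sum_l tau l.
Proof.
move=> pn.
have -> : cost p [seq mean X (block j) | j <- enum 'I_n] C = topsum p (map dist_mean (enum 'I_n)).
  by rewrite /cost -map_comp.
have -> : cost p [seq X j | j <- enum 'I_n] C = topsum p (map dist_pt (enum 'I_n)).
  by rewrite /cost -map_comp.
have near : `|topsum p (map dist_mixed (enum 'I_n)) - topsum p (map dist_pt (enum 'I_n))|
            <= p%:R * ell.
  apply: topsum_lipschitz => [|j]; first by rewrite size_enum_ord; case/andP: pn.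
  rewrite /dist_mixed; case: ifP => [sh|_]; last by rewrite subrr normr0.
  rewrite /dist_mean /dist_pt; apply: le_trans (dist_set_lipschitz C _ _) _.
  by rewrite edistC (le_trans (edist_mean_le_seg_len X (block_id j))).
have := topsum_mixed_le pn; have := topsum_mean_le pn.
have : 0 <= (size C)%:R * \sum_l tau l by rewrite mulr_ge0 ?sumr_ge0.
by move: near; rewrite !ler_norml => /andP[]; lra.
Qed.

End Blocks.

Theorem lemma4p1 (R : realType) (alpha : R) (halpha : 0 < alpha) :
  exists2 beta : R, 0 < beta &
  forall (d : nat) (k : nat) (eps : R) (n : nat) (X : 'I_n -> 'rV[R]_d) (p : nat)
    (m : nat) (a v : 'I_m -> 'rV[R]_d) (s : R) (t : 'I_m -> R)
    (lab : 'I_n -> 'I_m) (grp : 'I_n -> nat) (C : seq 'rV[R]_d),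
    (0 < k)%N -> 0 < eps < 1 ->
    injective X ->
    (0 < p <= n)%N ->
    (* L is a finite collection of (distinct) lines l_i = {a i + r v i} *)
    (forall i, v i != 0) ->
    (forall i i', i != i' ->
       ~ (forall z, on_line (a i) (v i) z <-> on_line (a i') (v i') z)) ->
    0 < s -> (forall i, 0 < t i) ->
    (* (i) X is partitioned into X_l := {x_j | lab j = l}, with X_l in l *)
    (forall j, on_line (a (lab j)) (v (lab j)) (X j)) ->
    (* (ii) each X_l is partitioned into the groups Y_g := {x_j | grp j = g} *)
    (forall j j', grp j = grp j' -> lab j = lab j') ->
    (* the segments I(Y) of distinct groups on a same line are disjoint *)
    (forall j j', grp j <> grp j' -> lab j = lab j' ->
       ~ (exists z, in_hull X [set i | grp i == grp j] z /\
                    in_hull X [set i | grp i == grp j'] z)) ->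
    (forall j, seg_len X [set i | grp i == grp j] <= alpha * (eps / p%:R) * s
            \/ cum_err X [set i | grp i == grp j] <= alpha * (eps / k%:R) * t (lab j)) ->
    (* C is a set of k centers *)
    uniq C -> size C = k ->
    `| cost p [seq mean X [set i | grp i == grp j] | j <- enum 'I_n] C
       - cost p [seq X j | j <- enum 'I_n] C |
      <= beta * eps * (s + \sum_(i < m) t i).
Proof.
exists (3 * alpha); first by rewrite mulr_gt0.
move=> d k eps n X p m a v s t lab grp C k_gt0 /andP[eps_gt0 _] _ pn v_neq0 _ s_gt0 t_gt0.
move=> X_on_line grp_lab hulls_disjoint short_or_tight C_uniq C_size.
have C_neq0 : C != [::] by rewrite -size_eq0 C_size -lt0n.
have ell_ge0 : 0 <= alpha * (eps / p%:R) * s by rewrite !mulr_ge0 ?invr_ge0 ?ler0n ?ltW.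
have tau_ge0 l : 0 <= alpha * (eps / k%:R) * t l by rewrite !mulr_ge0 ?invr_ge0 ?ler0n ?ltW.
apply: le_trans (cost_blocks_approx X_on_line grp_lab hulls_disjoint v_neq0 C_neq0 C_uniq
                   tau_ge0 ell_ge0 short_or_tight pn) _.
rewrite C_size -mulr_sumr.
have [p_gt0 _] := andP pn.
have -> : p%:R * (alpha * (eps / p%:R) * s) = alpha * eps * s.
  by field; rewrite pnatr_eq0 -lt0n.
have -> : 3 * k%:R * (alpha * (eps / k%:R) * \sum_l t l) = 3 * (alpha * eps * \sum_l t l).
  by field; rewrite pnatr_eq0 -lt0n.
have : 0 <= alpha * eps * s by rewrite !mulr_ge0 ?ltW.
by rewrite !mulrDr; lra.
Qed.
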